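(* Let $(\gamma^\sharp,\lambda^\sharp)$ be an eligible pair. Then $1-\gamma^{0T}\Sigma_{-1,-1}\gamma^\sharp\ge\Lambda_{\min}^2-o(1)$; in particular $1-\gamma^{0T}\Sigma_{-1,-1}\gamma^\sharp$ is eventually strictly positive and bounded away from zero. For $n$ sufficiently large define $$\Theta_1^\sharp:=\begin{pmatrix}1\\-\gamma^\sharp\end{pmatrix}\Big/\big(1-\gamma^{0T}\Sigma_{-1,-1}\gamma^\sharp\big)\in\mathbb{R}^p .$$ Then $\|\Sigma(\Theta_1^\sharp-\Theta_1)\|_\infty\le\lambda_0^\sharp$, where $\lambda_0^\sharp:=\lambda^\sharp/(1-\gamma^{0T}\Sigma_{-1,-1}\gamma^\sharp)=\mathcal{O}(\lambda^\sharp)$. Moreover $$\Theta_1^{\sharp T}\Sigma\Theta_1^\sharp=\Theta^\sharp_{1,1}+o(1)\le\Theta_{1,1}+o(1),$$ where $\Theta^\sharp_{1,1}$ denotes the first entry of $\Theta_1^\sharp$. Finally, in order that $\Theta_{1,1}-\Theta^\sharp_{1,1}$ be strictly positive and bounded away from zero, it must be true that $\lambda^\sharp\|\gamma^0\|_1$ is strictly positive and bounded away from zero.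
   Context: Asymptotic framework: all quantities may depend on $n$; limits are as $n\to\infty$. $\mathbf{x}=(\mathbf{x}_1,\dots,\mathbf{x}_p)$ is a zero-mean Gaussian row vector with covariance $\Sigma=\mathbb{E}\mathbf{x}^T\mathbf{x}$, nonsingular with all diagonal entries $1$ and smallest eigenvalue $\Lambda_{\min}^2$ with $1/\Lambda_{\min}^2=\mathcal{O}(1)$. $\Theta:=\Sigma^{-1}$, $\Theta_1$ is its first column and $\Theta_{1,1}$ its $(1,1)$ entry. $\mathbf{x}_{-1}:=(\mathbf{x}_2,\dots,\mathbf{x}_p)$, $\Sigma_{-1,-1}:=\mathbb{E}\mathbf{x}_{-1}^T\mathbf{x}_{-1}$, and $\gamma^0:=\Sigma_{-1,-1}^{-1}\mathbb{E}\mathbf{x}_{-1}^T\mathbf{x}_1\in\mathbb{R}^{p-1}$ is the coefficient vector of the projection of $\mathbf{x}_1$ on $\mathbf{x}_{-1}$. A pair $(\gamma^\sharp,\lambda^\sharp)$ with $\gamma^\sharp\in\mathbb{R}^{p-1}$, $\lambda^\sharp>0$ is called eligible if $\|\Sigma_{-1,-1}(\gamma^\sharp-\gamma^0)\|_\infty\le\lambda^\sharp$ and $\lambda^\sharp\|\gamma^\sharp\|_1\to0$. *)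

From HB Require Import structures.
From mathcomp Require Import all_boot all_order all_algebra.
From mathcomp Require Import all_classical all_reals all_analysis.
Set Implicit Arguments. Unset Strict Implicit. Unset Printing Implicit Defensive.
Import Order.TTheory GRing.Theory Num.Theory numFieldNormedType.Exports.
Local Open Scope classical_set_scope.
Local Open Scope ring_scope.

(* Convention: p = q.+1, coordinates indexed by 'I_q.+1, coordinate 1 of the
   paper is ord0, and the coordinates of x_{-1} are lift ord0 j, j : 'I_q. *)
Section Defs.
Variable R : realType.

Definition Smm (q : nat) (S : 'M[R]_q.+1) : 'M[R]_q :=
  \matrix_(i, j) S (lift ord0 i) (lift ord0 j).
Definition Sm1 (q : nat) (S : 'M[R]_q.+1) : 'cV[R]_q :=
  \col_i S (lift ord0 i) ord0.
Definition gamma0 (q : nat) (S : 'M[R]_q.+1) : 'cV[R]_q :=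
  invmx (Smm S) *m Sm1 S.

Definition supnorm (m : nat) (v : 'cV[R]_m) : R := \big[Num.max/0]_i `|v i 0|.
Definition l1norm (m : nat) (v : 'cV[R]_m) : R := \sum_i `|v i 0|.

Definition Theta1 (q : nat) (S : 'M[R]_q.+1) : 'cV[R]_q.+1 := col ord0 (invmx S).

Definition Dsharp (q : nat) (S : 'M[R]_q.+1) (g : 'cV[R]_q) : R :=
  1 - ((gamma0 S)^T *m Smm S *m g) 0 0.

Definition Theta1sharp (q : nat) (S : 'M[R]_q.+1) (g : 'cV[R]_q) : 'cV[R]_q.+1 :=
  (Dsharp S g)^-1 *:
    \col_(i < q.+1) match unlift ord0 i with None => 1 | Some j => - g j 0 end.

Definition qform (m : nat) (S : 'M[R]_m) (v : 'cV[R]_m) : R := (v^T *m S *m v) 0 0.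

Definition eligible (q : nat -> nat) (Sigma : forall n, 'M[R]_((q n).+1))
  (gs : forall n, 'cV[R]_(q n)) (ls : nat -> R) : Prop :=
  (forall n, 0 < ls n) /\
  (forall n, supnorm (Smm (Sigma n) *m (gs n - gamma0 (Sigma n))) <= ls n) /\
  ((fun n => ls n * l1norm (gs n)) @ \oo --> (0 : R)).
End Defs.

(* Write s for the Schur complement 1 - gamma0' Sigma_{-1,-1} gamma0 and
   u(g) for the vector (1, -g).  Since Sigma_{-1,-1} gamma0 = E x_{-1}' x_1,
   Sigma u(gamma0) = (s, 0), so Theta_1 = u(gamma0) / s and Theta_{11} = 1/s;
   moreover s = u(gamma0)' Sigma u(gamma0) >= Lambda_min^2 |u(gamma0)|^2 >= Lambda_min^2.
   For an eligible gamma#, with h = gamma# - gamma0,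
   Sigma u(gamma#) = (D, -Sigma_{-1,-1} h) where D = 1 - gamma0' Sigma_{-1,-1} gamma#,
   and s - D = gamma0' Sigma_{-1,-1} h = gamma#' Sigma_{-1,-1} h - h' Sigma_{-1,-1} h
   lies below lambda# |gamma#|_1 and in absolute value below lambda# |gamma0|_1.
   All claims follow from these identities once D and s are bounded below by a
   common constant.  The Rayleigh bound holds because the infimum mu of the
   Rayleigh quotient is an eigenvalue: otherwise Sigma - mu would be invertible and
   positive semidefinite, hence coercive (|x|^2 <= K x'(Sigma - mu)x), making
   mu + 1/K a larger lower bound. *)

From HB Require Import structures.
From mathcomp Require Import all_boot all_order all_algebra.
From mathcomp Require Import all_classical all_reals all_analysis.
From mathcomp Require Import ring lra.
Import Order.TTheory GRing.Theory Num.Theory numFieldNormedType.Exports.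
Local Open Scope classical_set_scope.
Local Open Scope ring_scope.

Set Implicit Arguments. Unset Strict Implicit. Unset Printing Implicit Defensive.

Section QuadraticForms.
Variable R : realType.

Definition bform m (A : 'M[R]_m) (x y : 'cV[R]_m) : R := (x^T *m A *m y) 0 0.
Definition sqnorm m (x : 'cV[R]_m) : R := (x^T *m x) 0 0.

Lemma qformE m (A : 'M[R]_m) x : qform A x = bform A x x.
Proof. by []. Qed.

Lemma sqnormE m (x : 'cV[R]_m) : sqnorm x = \sum_i x i 0 ^+ 2.
Proof. by rewrite /sqnorm mxE; apply: eq_bigr => i _; rewrite mxE expr2. Qed.

Lemma sqnorm_ge0 m (x : 'cV[R]_m) : 0 <= sqnorm x.
Proof. by rewrite sqnormE sumr_ge0 // => i _; rewrite sqr_ge0. Qed.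

Lemma sqnorm0 m : sqnorm (0 : 'cV[R]_m) = 0.
Proof. by rewrite /sqnorm trmx0 mul0mx mxE. Qed.

Lemma sqnorm_eq0 m (x : 'cV[R]_m) : (sqnorm x == 0) = (x == 0).
Proof.
apply/idP/eqP => [|->]; last by rewrite sqnorm0.
rewrite sqnormE psumr_eq0 => [/allP x0|i _]; last exact: sqr_ge0.
by apply/colP => i; apply/eqP; rewrite mxE -sqrf_eq0 (implyP (x0 i _)) ?mem_index_enum.
Qed.

Lemma sqnorm_gt0 m (x : 'cV[R]_m) : (0 < sqnorm x) = (x != 0).
Proof. by rewrite lt_def sqnorm_ge0 sqnorm_eq0 andbT. Qed.

Lemma sqr_le_sqnorm m (x : 'cV[R]_m) i : x i 0 ^+ 2 <= sqnorm x.
Proof. by rewrite sqnormE (bigD1 i) //= lerDl sumr_ge0 // => j _; exact: sqr_ge0. Qed.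

Lemma norm_mul_le_sqnorm m (x : 'cV[R]_m) i j : `|x i 0 * x j 0| <= sqnorm x.
Proof.
have sqr_norm_le k : `|x k 0| ^+ 2 <= sqnorm x.
  by rewrite real_normK ?num_real ?sqr_le_sqnorm.
have := sqr_ge0 (`|x i 0| - `|x j 0|); have := sqr_norm_le i; have := sqr_norm_le j.
rewrite normrM sqrrB mulr2n; lra.
Qed.

Lemma norm_bform_le m (A : 'M[R]_m) x :
  `|bform A x x| <= (\sum_i \sum_j `|A i j|) * sqnorm x.
Proof.
rewrite /bform mxE exchange_big /= mulr_suml; apply: le_trans (ler_norm_sum _ _ _) _.
apply: ler_sum => j _; rewrite mxE !mulr_suml; apply: le_trans (ler_norm_sum _ _ _) _.
apply: ler_sum => i _; rewrite mxE mulrAC normrM mulrC.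
by rewrite ler_wpM2l // norm_mul_le_sqnorm.
Qed.

Lemma bform_sym m (A : 'M[R]_m) x y : A^T = A -> bform A y x = bform A x y.
Proof.
move=> symA; rewrite /bform.
have -> : y^T *m A *m x = (x^T *m A *m y)^T by rewrite !trmx_mul trmxK symA mulmxA.
by rewrite mxE.
Qed.

Lemma bformBl m (A : 'M[R]_m) x y z : bform A (x - y) z = bform A x z - bform A y z.
Proof. by rewrite /bform linearB /= !mulmxBl !mxE. Qed.

Lemma bformBr m (A : 'M[R]_m) x y z : bform A x (y - z) = bform A x y - bform A x z.
Proof. by rewrite /bform mulmxBr !mxE. Qed.

Lemma bformNr m (A : 'M[R]_m) x y : bform A x (- y) = - bform A x y.
Proof. by rewrite /bform mulmxN !mxE. Qed.

Lemma qformDZ m (A : 'M[R]_m) x y t :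
  qform A (x + t *: y) =
  qform A x + t * bform A x y + t * bform A y x + t ^+ 2 * qform A y.
Proof.
rewrite /qform /bform [(x + _)^T]linearD /= [(t *: y)^T]linearZ /= !mulmxDl !mulmxDr.
by rewrite -!scalemxAl -!scalemxAr !mxE; ring.
Qed.

Lemma nonneg_quadratic_disc (a b c : R) : 0 <= c ->
  (forall t, 0 <= a + t * b + t * b + t ^+ 2 * c) -> b ^+ 2 <= a * c.
Proof.
move=> c_ge0 nonneg; have [c_gt0|] := ltP 0 c.
  have := nonneg (- b / c).
  have -> : a + - b / c * b + - b / c * b + (- b / c) ^+ 2 * c = a - b ^+ 2 / c.
    by field; rewrite gt_eqF.
  by rewrite subr_ge0 ler_pdivrMr.
move=> c_le0; have c0 : c = 0 by apply/eqP; rewrite eq_le c_le0 c_ge0.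
have [-> | b_neq0] := eqVneq b 0; first by rewrite expr0n c0 mulr0.
have := nonneg (- (a + 1) / (2 * b)); rewrite c0 !mulr0 addr0.
have -> : - (a + 1) / (2 * b) * b = - (a + 1) / 2 by field.
move=> h; lra.
Qed.

Lemma psd_cauchy_schwarz m (A : 'M[R]_m) x y : A^T = A ->
  (forall z, 0 <= qform A z) -> bform A x y ^+ 2 <= qform A x * qform A y.
Proof.
move=> symA psdA; apply: nonneg_quadratic_disc => // t.
by have := psdA (x + t *: y); rewrite qformDZ (bform_sym _ _ symA).
Qed.

Lemma bform_invmxr m (A : 'M[R]_m) x :
  A \in unitmx -> bform A x (invmx A *m x) = sqnorm x.
Proof. by move=> unitA; rewrite /bform -mulmxA mulKVmx. Qed.

Lemma qform_invmx m (A : 'M[R]_m) x : A \in unitmx ->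
  qform A (invmx A *m x) = qform (invmx A)^T x.
Proof. by move=> unitA; rewrite /qform trmx_mul -!mulmxA mulKVmx. Qed.

Lemma qform_sub_scalar m (A : 'M[R]_m) a x :
  qform (A - a%:M) x = qform A x - a * sqnorm x.
Proof.
by rewrite /qform /sqnorm mulmxBr mulmxBl mul_mx_scalar -scalemxAl !mxE.
Qed.

Lemma psd_unitmx_coercive m (A : 'M[R]_m) : A^T = A ->
  (forall z, 0 <= qform A z) -> A \in unitmx ->
  exists2 K, 0 < K & forall x, sqnorm x <= K * qform A x.
Proof.
move=> symA psdA unitA; set K0 := \sum_i \sum_j `|(invmx A)^T i j|.
have K0_ge0 : 0 <= K0 by rewrite sumr_ge0 // => i _; rewrite sumr_ge0.
exists (1 + K0) => [|x]; first by rewrite ltr_wpDr.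
have [->|x_neq0] := eqVneq x 0; first by rewrite sqnorm0 mulr_ge0 ?addr_ge0.
(* Cauchy-Schwarz with [y = A^-1 x] bounds [|x|^4] by [x^T A x] times [x^T A^-T x]. *)
have := psd_cauchy_schwarz x (invmx A *m x) symA psdA.
rewrite bform_invmxr // qform_invmx // => cs.
have inv_le : qform (invmx A)^T x <= (1 + K0) * sqnorm x.
  apply: le_trans (ler_norm _) _; apply: le_trans (norm_bform_le _ _) _.
  by rewrite ler_wpM2r ?sqnorm_ge0 // lerDr.
rewrite -(ler_pM2r (_ : 0 < sqnorm x)) ?sqnorm_gt0 // -expr2.
by apply: le_trans cs _; rewrite mulrAC [leRHS]mulrC ler_wpM2l.
Qed.

Lemma coercive_unitmx m (A : 'M[R]_m) K :
  (forall x, sqnorm x <= K * qform A x) -> A \in unitmx.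
Proof.
move=> coerc; rewrite -row_free_unit -kermx_eq0.
apply: contraT => /rowV0Pn [v /sub_kermxP vA0 v_neq0].
have := coerc v^T; rewrite /qform trmxK vA0 mul0mx mxE mulr0.
by rewrite leNgt sqnorm_gt0 trmx_eq0 v_neq0.
Qed.

Lemma psd_unitmx_eigenvalue_gt0 m (A : 'M[R]_m) l : A^T = A ->
  (forall z, 0 <= qform A z) -> A \in unitmx -> eigenvalue A l -> 0 < l.
Proof.
move=> symA psdA unitA /eigenvalueP [v vA v_neq0].
have [K K_gt0 coerc] := psd_unitmx_coercive symA psdA unitA.
have N_gt0 : 0 < sqnorm v^T by rewrite sqnorm_gt0 trmx_eq0.
have vAv : qform A v^T = l * sqnorm v^T.
  by rewrite /qform /sqnorm trmxK vA -scalemxAl [in LHS]mxE.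
have := coerc v^T; rewrite vAv => N_le.
rewrite ltNge; apply/negP => l_le0.
have := mulr_ge0_le0 (ltW K_gt0) (mulr_le0_ge0 l_le0 (ltW N_gt0)); lra.
Qed.

Lemma eigenvalue_lb_le_qform n (S : 'M[R]_n.+1) l : S^T = S ->
  (forall z, 0 <= qform S z) -> (forall a, eigenvalue S a -> l <= a) ->
  forall x, l * sqnorm x <= qform S x.
Proof.
move=> symS psdS l_lb.
pose E := [set qform S x / sqnorm x | x in [set x | 0 < sqnorm x]].
have E_neq0 : E !=set0.
  set e : 'cV[R]_n.+1 := const_mx 1; exists (qform S e / sqnorm e), e => //=.
  by apply: lt_le_trans (sqr_le_sqnorm _ ord0); rewrite mxE expr1n.
set mu := inf E.
have mu_le x : mu * sqnorm x <= qform S x.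
  have [->|x_neq0] := eqVneq x 0; first by rewrite sqnorm0 mulr0 psdS.
  have x_gt0 : 0 < sqnorm x by rewrite sqnorm_gt0.
  rewrite -ler_pdivlMr //; apply: ge_inf; last by exists x.
  by exists 0 => _ [y y_gt0 <-]; rewrite divr_ge0 ?psdS ?ltW.
suff /l_lb l_le_mu : eigenvalue S mu.
  by move=> x; apply: le_trans (mu_le x); rewrite ler_wpM2r ?sqnorm_ge0.
rewrite /eigenvalue /eigenspace kermx_eq0 row_free_unit; apply/negP => unitA.
have symA : (S - mu%:M)^T = S - mu%:M by rewrite linearB /= tr_scalar_mx symS.
have psdA z : 0 <= qform (S - mu%:M) z by rewrite qform_sub_scalar subr_ge0.
have [K K_gt0 coerc] := psd_unitmx_coercive symA psdA unitA.
(* Coercivity of [S - mu] pushes every Rayleigh quotient above [mu + 1/K]. *)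
have : mu + K^-1 <= mu.
  apply: lb_le_inf E_neq0 _ => _ [x x_gt0 <-] /=.
  rewrite ler_pdivlMr // mulrDl.
  by have := coerc x; rewrite qform_sub_scalar -ler_pdivrMl // lerBrDl.
by rewrite gerDl leNgt invr_gt0 K_gt0.
Qed.
End QuadraticForms.

Section Norms.
Variable R : realType.

Lemma supnorm_ge0 m (v : 'cV[R]_m) : 0 <= supnorm v.
Proof. by rewrite /supnorm; elim/big_ind: _ => // x y; rewrite le_max => ->. Qed.

Lemma normr_le_supnorm m (v : 'cV[R]_m) i : `|v i 0| <= supnorm v.
Proof. exact: le_bigmax. Qed.

Lemma supnorm_le m (v : 'cV[R]_m) b :
  0 <= b -> (forall i, `|v i 0| <= b) -> supnorm v <= b.
Proof. by move=> b_ge0 v_le; apply: bigmax_le. Qed.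

Lemma l1norm_ge0 m (v : 'cV[R]_m) : 0 <= l1norm v.
Proof. exact: sumr_ge0. Qed.

Lemma norm_dot_le m (w v : 'cV[R]_m) : `|(w^T *m v) 0 0| <= l1norm w * supnorm v.
Proof.
rewrite mxE /l1norm mulr_suml; apply: le_trans (ler_norm_sum _ _ _) _.
by apply: ler_sum => i _; rewrite mxE normrM ler_wpM2l ?normr_le_supnorm.
Qed.
End Norms.

Section BlockVectors.
Variables (R : realType) (q : nat).

Definition vcons (a : R) (w : 'cV[R]_q) : 'cV[R]_q.+1 :=
  locked (\col_i match unlift ord0 i with None => a | Some j => w j 0 end).

Lemma vconsE a w i :
  vcons a w i 0 = match unlift ord0 i with None => a | Some j => w j 0 end.
Proof. by rewrite /vcons -lock mxE. Qed.

Lemma vcons0 a w : vcons a w ord0 0 = a.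
Proof. by rewrite vconsE unlift_none. Qed.

Lemma vconsS a w j : vcons a w (lift ord0 j) 0 = w j 0.
Proof. by rewrite vconsE liftK. Qed.

Lemma scale_vcons c a w : c *: vcons a w = vcons (c * a) (c *: w).
Proof. by apply/colP => i; rewrite !mxE !vconsE; case: unlift => [j|] //; rewrite mxE. Qed.

Lemma vconsB a w b z : vcons a w - vcons b z = vcons (a - b) (w - z).
Proof. by apply/colP => i; rewrite !mxE !vconsE; case: unlift => [j|] //; rewrite !mxE. Qed.

Lemma tr_vcons_mul a w b z :
  ((vcons a w)^T *m vcons b z) 0 0 = a * b + (w^T *m z) 0 0.
Proof.
rewrite !mxE big_ord_recl !mxE !vcons0; congr (_ + _).
by apply: eq_bigr => j _; rewrite !mxE !vconsS.
Qed.

Lemma sqnorm_vcons a w : sqnorm (vcons a w) = a ^+ 2 + sqnorm w.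
Proof. by rewrite /sqnorm tr_vcons_mul expr2. Qed.

Lemma mul_vcons (S : 'M[R]_q.+1) a w : S^T = S ->
  S *m vcons a w =
  vcons (S ord0 ord0 * a + ((Sm1 S)^T *m w) 0 0) (a *: Sm1 S + Smm S *m w).
Proof.
move=> symS; apply/colP => i; rewrite !mxE big_ord_recl vcons0 vconsE.
case: (unliftP ord0 i) => [j ->|->].
  rewrite !mxE mulrC; congr (_ + _).
  by apply: eq_bigr => k _; rewrite !mxE vconsS.
congr (_ + _); apply: eq_bigr => k _.
by rewrite !mxE vconsS -[in LHS]symS mxE.
Qed.

Lemma qform_vcons0 (S : 'M[R]_q.+1) w : S^T = S ->
  qform S (vcons 0 w) = qform (Smm S) w.
Proof.
move=> symS; rewrite /qform -mulmxA mul_vcons // scale0r add0r tr_vcons_mul.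
by rewrite mul0r add0r mulmxA.
Qed.
End BlockVectors.

Lemma inv_sub_inv_le (R : realFieldType) (a b c x : R) : 0 < c -> c <= a -> c <= b ->
  b - a <= x -> 0 <= x -> a^-1 - b^-1 <= x / c ^+ 2.
Proof.
move=> c_gt0 ca cb ba_le x_ge0.
have a_gt0 := lt_le_trans c_gt0 ca; have b_gt0 := lt_le_trans c_gt0 cb.
have -> : a^-1 - b^-1 = (b - a) / (a * b) by field; rewrite !gt_eqF.
have ab_gt0 : 0 < a * b by rewrite mulr_gt0.
apply: le_trans (_ : x / (a * b) <= _); first by rewrite ler_wpM2r // invr_ge0 ltW.
rewrite ler_wpM2l // lef_pV2 ?posrE ?exprn_gt0 // expr2.
exact: ler_pM (ltW c_gt0) (ltW c_gt0) ca cb.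
Qed.

Definition schur_compl (R : realType) q (S : 'M[R]_q.+1) : R :=
  S ord0 ord0 - qform (Smm S) (gamma0 S).

Section SchurComplement.
Variables (R : realType) (q : nat) (S : 'M[R]_q.+1).
Hypotheses (symS : S^T = S) (psdS : forall x, 0 <= qform S x) (unitS : S \in unitmx).

Local Notation M := (Smm S).
Local Notation g0 := (gamma0 S).

Lemma trmx_Smm : M^T = M.
Proof. by apply/matrixP => i j; rewrite !mxE -[in LHS]symS mxE. Qed.

Lemma Smm_psd w : 0 <= qform M w.
Proof. by rewrite -qform_vcons0. Qed.

Lemma Smm_unitmx : M \in unitmx.
Proof.
have [K _ coerc] := psd_unitmx_coercive symS psdS unitS.
apply: (@coercive_unitmx _ _ _ K) => w; rewrite -qform_vcons0 //.
by apply: le_trans (coerc _); rewrite sqnorm_vcons expr0n add0r.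
Qed.

Lemma Smm_gamma0 : M *m g0 = Sm1 S.
Proof. by rewrite mulKVmx // Smm_unitmx. Qed.

Lemma Sm1_mul x : ((Sm1 S)^T *m x) 0 0 = bform M g0 x.
Proof. by rewrite -Smm_gamma0 trmx_mul trmx_Smm. Qed.

Lemma mul_vcons_gamma0 : S *m vcons 1 (- g0) = vcons (schur_compl S) 0.
Proof.
by rewrite mul_vcons // mulr1 scale1r Sm1_mul bformNr mulmxN Smm_gamma0 subrr.
Qed.

Lemma qform_vcons_gamma0 : qform S (vcons 1 (- g0)) = schur_compl S.
Proof. by rewrite /qform -mulmxA mul_vcons_gamma0 tr_vcons_mul mul1r mulmx0 mxE addr0. Qed.

Lemma schur_compl_gt0 : 0 < schur_compl S.
Proof.
have [K K_gt0 coerc] := psd_unitmx_coercive symS psdS unitS.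
have := coerc (vcons 1 (- g0)); rewrite qform_vcons_gamma0 sqnorm_vcons expr1n.
have := sqnorm_ge0 (- g0); rewrite -(pmulr_rgt0 _ K_gt0); lra.
Qed.

Lemma mul_Theta1 : S *m Theta1 S = vcons 1 0.
Proof.
rewrite /Theta1 colE mulmxA mulmxV // mul1mx.
by apply/colP => i; rewrite vconsE !mxE; case: unliftP => [j ->|->]; rewrite ?mxE.
Qed.

Lemma Theta1_schur : Theta1 S = (schur_compl S)^-1 *: vcons 1 (- g0).
Proof.
apply: (can_inj (mulKmx unitS)); rewrite mul_Theta1 -scalemxAr mul_vcons_gamma0.
by rewrite scale_vcons mulVf ?gt_eqF ?schur_compl_gt0 // scaler0.
Qed.

Lemma Theta1_first : Theta1 S ord0 0 = (schur_compl S)^-1.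
Proof. by rewrite Theta1_schur mxE vcons0 mulr1. Qed.

Lemma eigenvalue_lb_le_schur_compl l :
  (forall a, eigenvalue S a -> l <= a) -> l <= schur_compl S.
Proof.
move=> l_lb; have := eigenvalue_lb_le_qform symS psdS l_lb (vcons 1 (- g0)).
rewrite qform_vcons_gamma0 sqnorm_vcons expr1n.
have [l_le0 _|l_gt0] := lerP l 0; first exact: le_trans l_le0 (ltW schur_compl_gt0).
by apply: le_trans; rewrite ler_pMr // lerDl sqnorm_ge0.
Qed.

Hypothesis unit_diag : S ord0 ord0 = 1.
Variables (g : 'cV[R]_q) (ls : R).
Hypothesis err_le : supnorm (M *m (g - g0)) <= ls.

Local Notation D := (Dsharp S g).

Lemma schur_compl_sub_Dsharp : schur_compl S - D = bform M g0 (g - g0).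
Proof. by rewrite /schur_compl unit_diag bformBr /Dsharp /bform /qform; ring. Qed.

Lemma norm_bform_err_le a : `|bform M a (g - g0)| <= ls * l1norm a.
Proof.
rewrite /bform -mulmxA mulrC; apply: le_trans (norm_dot_le _ _) _.
by rewrite ler_wpM2l ?l1norm_ge0.
Qed.

Lemma schur_compl_sub_Dsharp_le : schur_compl S - D <= ls * l1norm g.
Proof.
have -> : schur_compl S - D = bform M g (g - g0) - qform M (g - g0).
  by rewrite schur_compl_sub_Dsharp qformE -bformBl subKr.
have := Smm_psd (g - g0); have := norm_bform_err_le g; rewrite ler_norml.
by move=> /andP[_ bform_le] qform_ge0; lra.
Qed.

Lemma norm_schur_compl_sub_Dsharp_le : `|schur_compl S - D| <= ls * l1norm g0.
Proof. by rewrite schur_compl_sub_Dsharp norm_bform_err_le. Qed.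

Lemma eigenvalue_lb_sub_err_le_min l : (forall a, eigenvalue S a -> l <= a) ->
  l - ls * l1norm g <= Num.min D (schur_compl S).
Proof.
move=> l_lb; have := eigenvalue_lb_le_schur_compl l_lb.
have := schur_compl_sub_Dsharp_le; have : 0 <= ls * l1norm g.
  by rewrite mulr_ge0 ?l1norm_ge0 ?(le_trans (supnorm_ge0 _) err_le).
by rewrite le_min; lra.
Qed.

Lemma Theta1sharpE : Theta1sharp S g = D^-1 *: vcons 1 (- g).
Proof.
by congr (_ *: _); apply/colP => i; rewrite vconsE !mxE; case: unlift => [j|]; rewrite ?mxE.
Qed.

Lemma Theta1sharp_first : Theta1sharp S g ord0 0 = D^-1.
Proof. by rewrite Theta1sharpE mxE vcons0 mulr1. Qed.

Lemma mul_vcons_sharp : S *m vcons 1 (- g) = vcons D (- (M *m (g - g0))).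
Proof.
rewrite mul_vcons // unit_diag mulr1 scale1r Sm1_mul bformNr mulmxN.
by rewrite mulmxBr Smm_gamma0 opprB.
Qed.

Lemma supnorm_Theta1sharp_err_le :
  0 < D -> supnorm (S *m (Theta1sharp S g - Theta1 S)) <= ls / D.
Proof.
move=> D_gt0; have lsD_ge0 : 0 <= ls / D.
  by rewrite divr_ge0 ?(le_trans (supnorm_ge0 _) err_le) ?ltW.
rewrite mulmxBr mul_Theta1 // Theta1sharpE -scalemxAr mul_vcons_sharp.
rewrite scale_vcons vconsB mulVf ?gt_eqF // subrr subr0.
apply: supnorm_le => // i; rewrite vconsE; case: unlift => [j|]; last by rewrite normr0.
have invD_ge0 : 0 <= D^-1 by rewrite invr_ge0 ltW.
rewrite mxE [X in `|_ * X|]mxE normrM normrN ger0_norm // mulrC ler_wpM2r //.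
exact: le_trans (normr_le_supnorm _ j) err_le.
Qed.

Lemma qform_Theta1sharp : D != 0 ->
  qform S (Theta1sharp S g) - Theta1sharp S g ord0 0 = D^-2 * bform M g (g - g0).
Proof.
move=> D_neq0; rewrite Theta1sharp_first /qform -mulmxA Theta1sharpE.
rewrite -scalemxAr mul_vcons_sharp !scale_vcons tr_vcons_mul mulr1 mulVf // mulr1.
rewrite addrC addKr /bform -mulmxA !mxE mulr_sumr; apply: eq_bigr => k _.
by rewrite !mxE -exprVn; ring.
Qed.

Section BoundsAwayFromZero.
Variable c : R.
Hypotheses (c_gt0 : 0 < c) (c_le_D : c <= D).

Lemma err_div_Dsharp_le : ls / D <= c^-1 * ls.
Proof.
have ls_ge0 : 0 <= ls := le_trans (supnorm_ge0 _) err_le.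
by rewrite mulrC ler_wpM2r // lef_pV2 ?posrE ?(lt_le_trans c_gt0 c_le_D).
Qed.

Lemma norm_qform_Theta1sharp_le :
  `|qform S (Theta1sharp S g) - Theta1sharp S g ord0 0| <= c ^- 2 * (ls * l1norm g).
Proof.
have D_gt0 := lt_le_trans c_gt0 c_le_D.
have invD2_ge0 : 0 <= D ^- 2 by rewrite invr_ge0 exprn_ge0 // ltW.
have invD2_le : D ^- 2 <= c ^- 2.
  by rewrite lef_pV2 ?posrE ?exprn_gt0 // ler_pXn2r // nnegrE ltW.
rewrite qform_Theta1sharp ?gt_eqF // normrM ger0_norm //.
exact: ler_pM invD2_ge0 (normr_ge0 _) invD2_le (norm_bform_err_le g).
Qed.

Hypothesis c_le_schur : c <= schur_compl S.

Lemma Theta1sharp_first_le :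
  Theta1sharp S g ord0 0 <= Theta1 S ord0 0 + ls * l1norm g / c ^+ 2.
Proof.
rewrite Theta1sharp_first Theta1_first -lerBlDl.
by apply: inv_sub_inv_le; rewrite ?schur_compl_sub_Dsharp_le ?mulr_ge0 ?l1norm_ge0
  ?(le_trans (supnorm_ge0 _) err_le).
Qed.

Lemma Theta1_first_sub_le :
  Theta1 S ord0 0 - Theta1sharp S g ord0 0 <= ls * l1norm g0 / c ^+ 2.
Proof.
rewrite Theta1sharp_first Theta1_first; apply: inv_sub_inv_le => //.
  by apply: le_trans (ler_norm _) _; rewrite distrC norm_schur_compl_sub_Dsharp_le.
by rewrite mulr_ge0 ?l1norm_ge0 ?(le_trans (supnorm_ge0 _) err_le).
Qed.
End BoundsAwayFromZero.

Lemma Theta1sharp_bounds c : 0 < c -> c <= Num.min D (schur_compl S) ->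
  [/\ supnorm (S *m (Theta1sharp S g - Theta1 S)) <= ls / D,
      ls / D <= c^-1 * ls,
      `|qform S (Theta1sharp S g) - Theta1sharp S g ord0 0| <= c ^- 2 * (ls * l1norm g),
      Theta1sharp S g ord0 0 <= Theta1 S ord0 0 + ls * l1norm g / c ^+ 2
    & Theta1 S ord0 0 - Theta1sharp S g ord0 0 <= ls * l1norm g0 / c ^+ 2].
Proof.
move=> c_gt0; rewrite le_min => /andP[c_le_D c_le_schur]; split.
- exact: supnorm_Theta1sharp_err_le (lt_le_trans c_gt0 c_le_D).
- exact: err_div_Dsharp_le.
- exact: norm_qform_Theta1sharp_le.
- exact: Theta1sharp_first_le.
- exact: Theta1_first_sub_le.
Qed.
End SchurComplement.

Section Eventually.
Context {R : realType} {T : Type} {F : set_system T} {FF : Filter F}.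

Lemma cvg0_le_scale (K : R) (u v : T -> R) : 0 < K -> v @ F --> 0 ->
  (\forall x \near F, `|u x| <= K * v x) -> u @ F --> 0.
Proof.
move=> K_gt0 v_cvg u_le; apply/cvgr0Pnorm_le => e e_gt0.
near=> x; apply: le_trans (_ : K * v x <= e); first by near: x.
rewrite mulrC -ler_pdivlMr //; apply: le_trans (ler_norm _) _.
by near: x; apply: cvgr0_norm_le => //; rewrite divr_gt0.
Unshelve. all: by end_near.
Qed.

Lemma bounded_away_of_inv_le (l d e : T -> R) C : (forall x, 0 < l x) ->
  (\forall x \near F, (l x)^-1 <= C) -> e @ F --> 0 ->
  (forall x, l x - e x <= d x) -> exists2 c, 0 < c & \forall x \near F, c <= d x.
Proof.
move=> l_gt0 l_inv_le e_cvg lde; set c := (Num.max C 1)^-1 / 2.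
have C1_gt0 : 0 < Num.max C 1 by rewrite lt_max ltr01 orbT.
have c_gt0 : 0 < c by rewrite divr_gt0 // invr_gt0.
exists c => //; near=> x.
have two_c_le : c * 2 <= l x.
  rewrite divfK ?pnatr_eq0 // -[l x]invrK lef_pV2 ?posrE ?invr_gt0 //.
  by apply: le_trans (_ : C <= _); [near: x | rewrite le_max lexx].
have : e x <= c by apply: le_trans (ler_norm _) _; near: x; exact: cvgr0_norm_le.
have := lde x; lra.
Unshelve. all: by end_near.
Qed.
End Eventually.

Theorem lemma2p1 (R : realType) (q : nat -> nat)
  (Sigma : forall n, 'M[R]_((q n).+1)) (lmin : nat -> R)
  (gs : forall n, 'cV[R]_(q n)) (ls : nat -> R)
  (Hsym : forall n, (Sigma n)^T = Sigma n)
  (Hpsd : forall n (x : 'cV[R]_((q n).+1)), 0 <= qform (Sigma n) x)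
  (Hinv : forall n, Sigma n \in unitmx)
  (Hdiag : forall n i, Sigma n i i = 1)
  (Hlev : forall n, eigenvalue (Sigma n) (lmin n))
  (Hlmin : forall n a, eigenvalue (Sigma n) a -> lmin n <= a)
  (Hbnd : exists C : R, \forall n \near \oo, (lmin n)^-1 <= C)
  (Hel : eligible Sigma gs ls) :
  let D := fun n => Dsharp (Sigma n) (gs n) in
  let Ts := fun n => Theta1sharp (Sigma n) (gs n) in
  (exists e : nat -> R, e @ \oo --> (0 : R) /\ forall n, lmin n - e n <= D n) /\
  (exists c : R, 0 < c /\ \forall n \near \oo, c <= D n) /\
  (\forall n \near \oo,
     supnorm (Sigma n *m (Ts n - Theta1 (Sigma n))) <= ls n / D n) /\
  (exists C : R, \forall n \near \oo, ls n / D n <= C * ls n) /\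
  ((fun n => qform (Sigma n) (Ts n) - Ts n ord0 0) @ \oo --> (0 : R)) /\
  (exists e : nat -> R, e @ \oo --> (0 : R) /\
     \forall n \near \oo, Ts n ord0 0 <= Theta1 (Sigma n) ord0 0 + e n) /\
  ((exists c : R, 0 < c /\
      \forall n \near \oo, c <= Theta1 (Sigma n) ord0 0 - Ts n ord0 0) ->
   exists c : R, 0 < c /\
      \forall n \near \oo, c <= ls n * l1norm (gamma0 (Sigma n))).
Proof.
move=> D Ts; case: Hel => ls_gt0 [err_le eps_cvg]; case: Hbnd => C lmin_inv_le.
set eps := fun n => ls n * l1norm (gs n) in eps_cvg.
have lmin_sub_eps_le n : lmin n - eps n <= Num.min (D n) (schur_compl (Sigma n)).
  exact (eigenvalue_lb_sub_err_le_min (Hsym n) (Hpsd n) (Hinv n) (Hdiag n ord0) (err_le n)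
    (Hlmin n)).
have lmin_gt0 n : 0 < lmin n := psd_unitmx_eigenvalue_gt0 (Hsym n) (Hpsd n) (Hinv n) (Hlev n).
have [c c_gt0 c_le] := bounded_away_of_inv_le lmin_gt0 lmin_inv_le eps_cvg lmin_sub_eps_le.
have bounds n := Theta1sharp_bounds (Hsym n) (Hpsd n) (Hinv n) (Hdiag n ord0) (err_le n) c_gt0.
split; first by exists eps; split=> // n; have := lmin_sub_eps_le n; rewrite le_min => /andP[].
split; first by exists c; split=> //; apply: filterS c_le => n; rewrite le_min => /andP[].
split; first by apply: filterS c_le => n /bounds [].
split; first by exists c^-1; apply: filterS c_le => n /bounds [].
split.
  apply: (cvg0_le_scale (_ : 0 < c ^- 2) eps_cvg); first by rewrite invr_gt0 exprn_gt0.
  by apply: filterS c_le => n /bounds [].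
split.
  exists (fun n => eps n / c ^+ 2); split; last by apply: filterS c_le => n /bounds [].
  by rewrite -(mul0r (c ^- 2)); apply: cvgM => //; exact: cvg_cst.
case=> c1 [c1_gt0 c1_le]; exists (c1 * c ^+ 2); split; first by rewrite mulr_gt0 ?exprn_gt0.
apply: (filterS2 _ _ c_le c1_le) => n /bounds [_ _ _ _ Theta1_sub_le] c1_le_n.
by rewrite -ler_pdivlMr ?exprn_gt0 //; apply: le_trans c1_le_n Theta1_sub_le.
Qed.
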